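(* Let $n\ge1$ and $c\ge2$ be integers and $C=\{0,1,\dots,c-1\}\subseteq\mathbb{Z}/n\mathbb{Z}$. For all nonempty $A,B\subseteq\mathbb{Z}/n\mathbb{Z}$, \[ |A+B+C|\ge\min\{n,\ |A|+|B|+(c-2)\}. \]
   Context: For subsets $X,Y$ of an abelian group, $X+Y=\{x+y: x\in X, y\in Y\}$; elements of $C$ are taken modulo $n$. *)

From mathcomp Require Import all_boot all_algebra.
Set Implicit Arguments. Unset Strict Implicit. Unset Printing Implicit Defensive.

(* Z/nZ is modelled by 'I_n.+1 (i.e. modulus n.+1 >= 1), which carries
   MathComp's canonical zmodType structure (addition modulo n.+1). *)

Definition sumset (n : nat) (X Y : {set 'I_n.+1}) : {set 'I_n.+1} :=
  [set (x + y)%R | x in X, y in Y].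

Definition initC (n c : nat) : {set 'I_n.+1} :=
  [set (inZp (nat_of_ord k) : 'I_n.+1) | k : 'I_c].

From mathcomp Require Import all_boot all_algebra zify.

(* In a finite abelian group generated by [g], write [P_c = {0, g, ..., (c-1)g}].
   The heart of the matter is [|A + B + P_2| >= min(|G|, |A| + |B|)], by induction
   on [|B|].  If some [a + b' - b] (with [a] in [A], [b], [b'] in [B]) escapes [A],
   the e-transform with [e = a - b] replaces [(A, B)] by [(A u (B + e), B n (A - e))]:
   this keeps [|A| + |B|], shrinks [A + B] and strictly shrinks [B].  Otherwise [A]
   is stable under [B - B]; picking [x] with [x - g] in [A] but [x] not in [A] (it
   exists since [g] generates [G]), the sets [A + b0] and [x + B] are disjoint and
   both lie in [A + B + P_2].  Finally each further summand [P_2] adds at least one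
   element until the whole group is covered, and [P_c] is a sum of [c - 1] copies
   of [P_2]. *)

Set Implicit Arguments.
Unset Strict Implicit.
Unset Printing Implicit Defensive.

Import GRing.Theory.

Section Sumsets.
Local Open Scope ring_scope.

Variable G : finZmodType.
Implicit Types (A B X Y : {set G}) (x y : G).

Definition addset X Y : {set G} := [set x + y | x in X, y in Y].

Lemma mem_addset X Y x y : x \in X -> y \in Y -> x + y \in addset X Y.
Proof. by move=> Xx Yy; apply/imset2P; exists x y. Qed.

Lemma addsetSl X X' Y : X \subset X' -> addset X Y \subset addset X' Y.
Proof.
move=> sXX'; apply/subsetP => _ /imset2P[x y Xx Yy ->].
exact: mem_addset (subsetP sXX' x Xx) Yy.
Qed.

Lemma addset_neq0 X Y : X != set0 -> Y != set0 -> addset X Y != set0.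
Proof.
by move=> /set0Pn[x Xx] /set0Pn[y Yy]; apply/set0Pn; exists (x + y); apply: mem_addset.
Qed.

Variable g : G.

Definition gprog (c : nat) : {set G} := [set g *+ k | k : 'I_c].

Lemma mem_gprog (c k : nat) : (k < c)%N -> g *+ k \in gprog c.
Proof. by move=> ltkc; apply/imsetP; exists (Ordinal ltkc). Qed.

Lemma gprog_neq0 (c : nat) : gprog c.+1 != set0.
Proof. by apply/set0Pn; exists (g *+ 0); apply: mem_gprog. Qed.

Lemma sub_addset_gprog X (c : nat) : X \subset addset X (gprog c.+1).
Proof.
by apply/subsetP => x Xx; rewrite -[x]addr0 -(mulr0n g); apply: mem_addset _ (mem_gprog _).
Qed.

Lemma mem_addset_gprog2 X x : x - g \in X -> x \in addset X (gprog 2).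
Proof.
by move=> Xxg; rewrite -(subrK g x); apply: mem_addset Xxg (mem_gprog (k := 1) _).
Qed.

Lemma addset_gprogD X (p q : nat) :
  addset (addset X (gprog p.+1)) (gprog q.+1) \subset addset X (gprog (p + q).+1).
Proof.
apply/subsetP => _ /imset2P[_ _ /imset2P[x _ Xx /imsetP[i _ ->] ->] /imsetP[j _ ->] ->].
rewrite -addrA -mulrnDr; apply: mem_addset Xx (mem_gprog _).
by have := ltn_ord i; have := ltn_ord j; lia.
Qed.

(* Dyson's e-transform, with e = a - b. *)
Lemma addset_transform A B a b b' :
    a \in A -> b \in B -> b' \in B -> a + b' - b \notin A ->
  exists A' B', [/\ A \subset A', b \in B', B' \proper B,
    (#|A'| + #|B'| = #|A| + #|B|)%N & addset A' B' \subset addset A B].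
Proof.
move=> Aa Bb Bb' Aa'; set e := a - b.
set Be := [set y + e | y in B]; set B' := [set y in B | y + e \in A].
have card_Be : #|Be| = #|B| by apply/card_imset/addIr.
have ABe : A :&: Be = [set y + e | y in B'].
  apply/setP => z; apply/setIP/imsetP => [[Az /imsetP[y By ez]]|[y]].
    by exists y; rewrite // inE By -ez.
  by rewrite inE => /andP[By Aye] ->; split; last by apply/imsetP; exists y.
have card_ABe : #|A :&: Be| = #|B'| by rewrite ABe; apply/card_imset/addIr.
exists (A :|: Be), B'; split.
- exact: subsetUl.
- by rewrite inE Bb /e addrC subrK.
- apply/properP; split; first by apply/subsetP => y; rewrite inE => /andP[].
  by exists b' => //; rewrite inE Bb' /e addrA (addrC b').
- by have := cardsUI A Be; rewrite card_Be card_ABe; lia.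
apply/subsetP => _ /imset2P[x y + + ->]; rewrite !inE => /orP[Ax|/imsetP[y' By' ->]].
  by case/andP=> By _; apply: mem_addset.
by case/andP=> _ Aye; rewrite -addrA addrC (addrC e); apply: mem_addset.
Qed.

Hypothesis g_gen : forall x : G, exists k, x = g *+ k.

Lemma not_addg_closed X :
  X != set0 -> X != setT -> exists2 x, x - g \in X & x \notin X.
Proof.
move=> /set0Pn[a Xa] XnT.
case: (pickP (fun x => (x - g \in X) && (x \notin X))) => [x /andP[]|closed].
  by exists x.
case/negP: XnT; apply/eqP/setP => y; rewrite inE.
have Xag k : a + g *+ k \in X.
  elim: k => [|k IHk]; first by rewrite addr0.
  by have := closed (a + g *+ k.+1); rewrite mulrSr addrA addrK IHk => /negbFE.
by have [k ek] := g_gen (y - a); rewrite -[y](subrK a) ek addrC Xag.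
Qed.

Lemma card_addset_gprog2 X :
  X != set0 -> (minn #|G| (#|X| + 1) <= #|addset X (gprog 2)|)%N.
Proof.
move=> X0; have [XT|XnT] := eqVneq X setT.
  by rewrite geq_min -{1}cardsT -XT subset_leq_card ?sub_addset_gprog.
have [x Xxg Xx] := not_addg_closed X0 XnT.
have -> : (#|X| + 1 = #|x |: X|)%N by rewrite cardsU1 Xx addnC.
rewrite geq_min; apply/orP; right; apply: subset_leq_card.
by rewrite subUset sub_addset_gprog sub1set mem_addset_gprog2.
Qed.

Lemma card_addset_gprog X (c : nat) :
  X != set0 -> (minn #|G| (#|X| + c) <= #|addset X (gprog c.+1)|)%N.
Proof.
move=> X0; elim: c => [|c IHc].
  by rewrite addn0 geq_min subset_leq_card ?sub_addset_gprog ?orbT.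
have := subset_leq_card (addset_gprogD X c 1); rewrite addn1.
have := card_addset_gprog2 (addset_neq0 X0 (gprog_neq0 c)).
by move: IHc; lia.
Qed.

Lemma card_addset_gprog2_closed A B :
    A != set0 -> B != set0 ->
    (forall a b b', a \in A -> b \in B -> b' \in B -> a + b' - b \in A) ->
  (minn #|G| (#|A| + #|B|) <= #|addset (addset A B) (gprog 2)|)%N.
Proof.
move=> A0 /set0Pn[b0 Bb0] closed.
have sub_sum : addset A B \subset addset (addset A B) (gprog 2) by apply: sub_addset_gprog.
set S1 := [set a + b0 | a in A].
have card_S1 : #|S1| = #|A| by apply/card_imset/addIr.
have sS1 : S1 \subset addset (addset A B) (gprog 2).
  by apply/subsetP => _ /imsetP[a Aa ->]; apply/(subsetP sub_sum)/mem_addset.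
have [AT|AnT] := eqVneq A setT.
  by rewrite geq_min -{1}cardsT -AT -card_S1 subset_leq_card.
have [x Axg Ax] := not_addg_closed A0 AnT.
set S2 := [set x + b | b in B].
have card_S2 : #|S2| = #|B| by apply/card_imset/addrI.
have sS2 : S2 \subset addset (addset A B) (gprog 2).
  apply/subsetP => _ /imsetP[b Bb ->].
  by apply: mem_addset_gprog2; rewrite addrAC mem_addset.
(* a + b0 = x + b would put x = a + b0 - b back into A. *)
have S12_0 : S1 :&: S2 = set0.
  apply/setP => z; rewrite inE [RHS]inE.
  apply/andP => -[/imsetP[a Aa ->] /imsetP[b Bb eab]].
  by move: Ax; rewrite (_ : x = a + b0 - b) ?closed // eab addrK.
rewrite geq_min -card_S1 -card_S2 -cardsUI S12_0 cards0 addn0; apply/orP; right.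
by rewrite subset_leq_card // subUset sS1 sS2.
Qed.

Lemma card_addset_addset_gprog2 A B :
    A != set0 -> B != set0 ->
  (minn #|G| (#|A| + #|B|) <= #|addset (addset A B) (gprog 2)|)%N.
Proof.
move: {2}#|B|.+1 (ltnSn #|B|) => k.
elim: k A B => [|k IHk] A B ltBk A0 B0; first by rewrite ltn0 in ltBk.
have [|noescape] :=
  boolP [exists a in A, exists b in B, exists b' in B, a + b' - b \notin A].
  case/exists_inP=> a Aa /exists_inP[b Bb /exists_inP[b' Bb' Aa']].
  have [A' [B' [sAA' B'b ltB'B cardAB subAB]]] := addset_transform Aa Bb Bb' Aa'.
  rewrite -cardAB; apply: leq_trans (subset_leq_card (addsetSl _ subAB)).
  apply: IHk.
  - by have := proper_card ltB'B; lia.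
  - by apply: contraNneq A0 => A'0; rewrite -subset0 -A'0.
  - by apply/set0Pn; exists b.
apply: card_addset_gprog2_closed => // a b b' Aa Bb Bb'; apply: contraNT noescape => Aa'.
apply/exists_inP; exists a => //.
by apply/exists_inP; exists b => //; apply/exists_inP; exists b'.
Qed.

Lemma card_addset_addset_gprog A B (c : nat) :
    A != set0 -> B != set0 ->
  (minn #|G| (#|A| + #|B| + c) <= #|addset (addset A B) (gprog c.+2)|)%N.
Proof.
move=> A0 B0; have := subset_leq_card (addset_gprogD (addset A B) 1 c).
have := card_addset_gprog c (addset_neq0 (addset_neq0 A0 B0) (gprog_neq0 1)).
by have := card_addset_addset_gprog2 A0 B0; rewrite add1n; lia.
Qed.

End Sumsets.

Lemma Zp1_generates (n : nat) (x : 'I_n.+1) : exists k, x = (Zp1 *+ k)%R.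
Proof. by exists x; apply: val_inj; rewrite Zp_mulrn /= modnMml mul1n modn_small. Qed.

Lemma sumset_addset (n : nat) (X Y : {set 'I_n.+1}) : sumset X Y = addset X Y.
Proof. by []. Qed.

Lemma initC_gprog (n c : nat) : initC n c = gprog Zp1 c.
Proof. by apply: eq_imset => k; apply: val_inj; rewrite Zp_mulrn /= modnMml mul1n. Qed.

Theorem lemma3p5 (n c : nat) (hc : 2 <= c) (A B : {set 'I_n.+1})
    (hA : A != set0) (hB : B != set0) :
  minn n.+1 (#|A| + #|B| + (c - 2)) <= #|sumset (sumset A B) (initC n c)|.
Proof.
case: c hc => [|[|c]] // _; rewrite subn2 !sumset_addset initC_gprog.
by have := card_addset_addset_gprog (@Zp1_generates n) c hA hB; rewrite card_ord.
Qed.
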